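(* Suppose $G$ satisfies (H1) and let $\gamma(\cdot,t)$, $t\in[0,\omega)$, be the solution of $\partial_t\gamma=G(k)kN$ with smooth closed strictly convex initial curve, on its maximal interval, with $\lim_{t\to\omega}A(t)=0$. Then $$\liminf_{t\to\omega}\ L(t)\Big(\int_0^{L(t)}k^2\,ds-\frac{\pi L(t)}{A(t)}\Big)\le 0.$$
   Context: (H1): $G\in C^3(0,\infty)$, $G>0$ and $G'\ge 0$ on $(0,\infty)$. $k$ is the positive curvature, $N$ the unit inward normal, $s$ arc length, $L(t)$ the length and $A(t)>0$ the enclosed area of $\gamma(\cdot,t)$; $\omega<\infty$ is the maximal existence time. *)

From Stdlib Require Import Reals Lra Classical ClassicalEpsilon.
Open Scope R_scope.

(* The derivative of f at x (the unique l with derivable_pt_lim f x l),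
   or an arbitrary value if f is not differentiable at x. *)
Definition Dr (f : R -> R) (x : R) : R :=
  epsilon (inhabits 0) (fun l => derivable_pt_lim f x l).

(* Riemann integral of f over [a,b] (0 if f is not Riemann integrable). *)
Definition RInt (f : R -> R) (a b : R) : R :=
  match excluded_middle_informative (inhabited (Riemann_integrable f a b)) with
  | left H => RiemannInt (epsilon H (fun _ => True))
  | right _ => 0
  end.

Definition H1 (G : R -> R) : Prop :=
  exists G1 G2 G3 : R -> R,
    forall x, 0 < x ->
      derivable_pt_lim G x (G1 x) /\
      derivable_pt_lim G1 x (G2 x) /\
      derivable_pt_lim G2 x (G3 x) /\
      continuity_pt G3 x /\
      0 < G x /\ 0 <= G1 x.

Definition dt_within (w : R) (f : R -> R) (t l : R) : Prop :=
  forall eps, 0 < eps -> exists del, 0 < del /\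
    forall h, h <> 0 -> Rabs h < del -> 0 <= t + h < w ->
      Rabs ((f (t + h) - f t) / h - l) < eps.

Definition cont_within (w : R) (f : R -> R -> R) (u t : R) : Prop :=
  forall eps, 0 < eps -> exists del, 0 < del /\
    forall u' t', Rabs (u' - u) < del -> Rabs (t' - t) < del -> 0 <= t' < w ->
      Rabs (f u' t' - f u t) < eps.

(* f is C^infinity on R x [0,w): all mixed partial derivatives exist and are
   jointly continuous. *)
Definition smooth_flow (w : R) (f : R -> R -> R) : Prop :=
  exists D : nat -> nat -> R -> R -> R,
    (forall u t, 0 <= t < w -> D 0%nat 0%nat u t = f u t) /\
    (forall i j u t, 0 <= t < w ->
        derivable_pt_lim (fun v => D i j v t) u (D (S i) j u t)) /\
    (forall i j u t, 0 <= t < w ->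
        dt_within w (fun s => D i j u s) t (D i (S j) u t)) /\
    (forall i j u t, 0 <= t < w -> cont_within w (D i j) u t).

Section Geometry.
Variables gx gy : R -> R -> R.

Definition xu (u t : R) : R := Dr (fun v => gx v t) u.
Definition yu (u t : R) : R := Dr (fun v => gy v t) u.
Definition xuu (u t : R) : R := Dr (fun v => xu v t) u.
Definition yuu (u t : R) : R := Dr (fun v => yu v t) u.
Definition xt (u t : R) : R := Dr (fun s => gx u s) t.
Definition yt (u t : R) : R := Dr (fun s => gy u s) t.

Definition speed (u t : R) : R := sqrt (xu u t ^ 2 + yu u t ^ 2).

(* signed curvature; positive for a counterclockwise convex curve *)
Definition curv (u t : R) : R :=
  (xu u t * yuu u t - yu u t * xuu u t) / speed u t ^ 3.

(* normal N = J T (tangent rotated by +pi/2): the inward normal of a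
   counterclockwise (k > 0) convex curve *)
Definition Nx (u t : R) : R := - yu u t / speed u t.
Definition Ny (u t : R) : R := xu u t / speed u t.

Definition length (t : R) : R := RInt (fun u => speed u t) 0 1.
Definition area (t : R) : R :=
  / 2 * RInt (fun u => gx u t * yu u t - gy u t * xu u t) 0 1.
Definition int_k2 (t : R) : R := RInt (fun u => curv u t ^ 2 * speed u t) 0 1.

End Geometry.

Definition is_solution (G : R -> R) (w : R) (gx gy : R -> R -> R) : Prop :=
  0 < w /\
  smooth_flow w gx /\ smooth_flow w gy /\
  (forall u t, 0 <= t < w -> gx (u + 1) t = gx u t /\ gy (u + 1) t = gy u t) /\
  (forall u t, 0 <= t < w -> 0 < speed gx gy u t) /\
  (forall u t, 0 <= t < w -> 0 < curv gx gy u t) /\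
  (forall u t, 0 < t < w ->
     xt gx u t = G (curv gx gy u t) * curv gx gy u t * Nx gx gy u t /\
     yt gy u t = G (curv gx gy u t) * curv gx gy u t * Ny gx gy u t).

(* initial curve is strictly convex: k > 0 (in is_solution) and it winds once,
   i.e. total curvature 2 pi (so gamma(.,0) is a simple strictly convex curve) *)
Definition initial_strictly_convex (gx gy : R -> R -> R) : Prop :=
  (forall u, 0 < curv gx gy u 0) /\
  RInt (fun u => curv gx gy u 0 * speed gx gy u 0) 0 1 = 2 * PI.

Definition maximal_solution (G : R -> R) (w : R) (gx gy : R -> R -> R) : Prop :=
  forall w' gx' gy', w < w' -> is_solution G w' gx' gy' ->
    ~ (forall u t, 0 <= t < w -> gx' u t = gx u t /\ gy' u t = gy u t).

Definition liminf_left_le (F : R -> R) (w c : R) : Prop :=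
  forall eps del, 0 < eps -> 0 < del ->
    exists t, 0 <= t < w /\ w - del < t /\ F t < c + eps.

(* Write P = int G(k) k ds and Q = int G(k) k^2 ds.  The first variation
   formulas give  L' = -Q  and  A' = -P, and the total curvature int k ds
   stays equal to 2 pi (its time derivative is the integral of an exact
   u-derivative of a periodic function).  Since G is nondecreasing, G(k) and
   k are similarly ordered, so Chebyshev's integral inequality with weight
   k ds gives  P * int k^2 ds <= Q * int k ds = 2 pi Q.  If the liminf were
   >= eps > 0, then  Phi = L^2/A - (eps/pi) ln A  would be nonincreasing
   near w, bounding ln A from below and contradicting A -> 0. *)

From Stdlib Require Import Reals Lra Classical ClassicalEpsilon FunctionalExtensionality List.
Open Scope R_scope.

Lemma Dr_eq (f : R -> R) x l : derivable_pt_lim f x l -> Dr f x = l.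
Proof.
  intro H. unfold Dr.
  assert (Hex : exists l, derivable_pt_lim f x l) by (exists l; exact H).
  pose proof (epsilon_spec (inhabits 0) _ Hex) as Hs.
  eapply uniqueness_limite; eauto.
Qed.

Lemma RInt_pr (f : R -> R) a b (pr : Riemann_integrable f a b) :
  RInt f a b = RiemannInt pr.
Proof.
  unfold RInt. destruct excluded_middle_informative as [H|H].
  - apply RiemannInt_P5.
  - exfalso. apply H. exact (inhabits pr).
Qed.

Definition cont01 (f : R -> R) := forall u, 0 <= u <= 1 -> continuity_pt f u.

Lemma cont01_integrable f : cont01 f -> Riemann_integrable f 0 1.
Proof. intro H. apply continuity_implies_RiemannInt; [lra|exact H]. Qed.

Lemma cont01_const c : cont01 (fun _ => c).
Proof. intros u _. apply continuity_pt_const. intros a b; reflexivity. Qed.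
Lemma cont01_plus f g : cont01 f -> cont01 g -> cont01 (fun x => f x + g x).
Proof. intros Hf Hg u Hu. apply continuity_pt_plus; auto. Qed.
Lemma cont01_minus f g : cont01 f -> cont01 g -> cont01 (fun x => f x - g x).
Proof. intros Hf Hg u Hu. apply continuity_pt_minus; auto. Qed.
Lemma cont01_mult f g : cont01 f -> cont01 g -> cont01 (fun x => f x * g x).
Proof. intros Hf Hg u Hu. apply continuity_pt_mult; auto. Qed.
Lemma cont01_scal l g : cont01 g -> cont01 (fun x => l * g x).
Proof. intro Hg. apply cont01_mult; [apply cont01_const|exact Hg]. Qed.

Lemma RInt_lin f g l : cont01 f -> cont01 g ->
  RInt (fun x => f x + l * g x) 0 1 = RInt f 0 1 + l * RInt g 0 1.
Proof.
  intros Hf Hg.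
  pose proof (cont01_integrable f Hf) as pf. pose proof (cont01_integrable g Hg) as pg.
  rewrite (RInt_pr _ _ _ (RiemannInt_P10 l pf pg)), (RInt_pr _ _ _ pf), (RInt_pr _ _ _ pg).
  apply RiemannInt_P13.
Qed.

Lemma RInt_const c : RInt (fun _ => c) 0 1 = c.
Proof.
  change (RInt (fct_cte c) 0 1 = c).
  rewrite (RInt_pr _ _ _ (RiemannInt_P14 0 1 c)). rewrite RiemannInt_P15. ring.
Qed.

Lemma RInt_scal f a : cont01 f -> RInt (fun x => a * f x) 0 1 = a * RInt f 0 1.
Proof.
  intro Hf. transitivity (RInt (fun x => (fun _ => 0) x + a * f x) 0 1).
  - f_equal. apply functional_extensionality; intro; ring.
  - rewrite RInt_lin; auto using cont01_const. rewrite RInt_const. ring.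
Qed.

Lemma RInt_plus f g : cont01 f -> cont01 g ->
  RInt (fun x => f x + g x) 0 1 = RInt f 0 1 + RInt g 0 1.
Proof.
  intros Hf Hg. transitivity (RInt (fun x => f x + 1 * g x) 0 1).
  - f_equal. apply functional_extensionality; intro; ring.
  - rewrite RInt_lin; auto. ring.
Qed.

Lemma RInt_minus f g : cont01 f -> cont01 g ->
  RInt (fun x => f x - g x) 0 1 = RInt f 0 1 - RInt g 0 1.
Proof.
  intros Hf Hg. transitivity (RInt (fun x => f x + (-1) * g x) 0 1).
  - f_equal. apply functional_extensionality; intro; ring.
  - rewrite RInt_lin; auto. ring.
Qed.

Lemma RInt_lin4 f1 f2 f3 f4 a1 a2 a3 a4 :
  cont01 f1 -> cont01 f2 -> cont01 f3 -> cont01 f4 ->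
  RInt (fun x => a1 * f1 x + a2 * f2 x + a3 * f3 x + a4 * f4 x) 0 1 =
  a1 * RInt f1 0 1 + a2 * RInt f2 0 1 + a3 * RInt f3 0 1 + a4 * RInt f4 0 1.
Proof.
  intros C1 C2 C3 C4.
  rewrite !RInt_plus; rewrite ?RInt_scal; auto;
    repeat apply cont01_plus; apply cont01_scal; auto.
Qed.

Lemma RInt_le f g : cont01 f -> cont01 g -> (forall x, 0 <= x <= 1 -> f x <= g x) ->
  RInt f 0 1 <= RInt g 0 1.
Proof.
  intros Hf Hg H.
  pose proof (cont01_integrable f Hf) as pf. pose proof (cont01_integrable g Hg) as pg.
  rewrite (RInt_pr _ _ _ pf), (RInt_pr _ _ _ pg).
  apply RiemannInt_P19; [lra|]. intros; apply H; lra.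
Qed.

Lemma RInt_nonneg f : cont01 f -> (forall x, 0 <= x <= 1 -> 0 <= f x) -> 0 <= RInt f 0 1.
Proof.
  intros Hf H. apply Rle_trans with (RInt (fun _ => 0) 0 1).
  - rewrite RInt_const; lra.
  - apply RInt_le; auto using cont01_const.
Qed.

(* A continuous positive function has positive integral (it has a positive minimum). *)
Lemma RInt_pos f : cont01 f -> (forall x, 0 <= x <= 1 -> 0 < f x) -> 0 < RInt f 0 1.
Proof.
  intros Hf H.
  destruct (continuity_ab_min f 0 1 ltac:(lra) Hf) as [m [Hm1 Hm2]].
  apply Rlt_le_trans with (RInt (fun _ => f m) 0 1).
  - rewrite RInt_const. apply H, Hm2.
  - apply RInt_le; auto using cont01_const.
Qed.

Lemma RInt_bound f e : cont01 f -> (forall x, 0 <= x <= 1 -> Rabs (f x) <= e) ->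
  Rabs (RInt f 0 1) <= e.
Proof.
  intros Hf H. apply Rabs_le. split.
  - rewrite <- (RInt_const (-e)). apply RInt_le; auto using cont01_const.
    intros x Hx; specialize (H x Hx); revert H; unfold Rabs; destruct Rcase_abs; lra.
  - rewrite <- (RInt_const e). apply RInt_le; auto using cont01_const.
    intros x Hx; specialize (H x Hx); revert H; unfold Rabs; destruct Rcase_abs; lra.
Qed.

Lemma RInt_derive (H Hd : R -> R) : (forall u, derivable_pt_lim H u (Hd u)) ->
  (forall u, continuity_pt Hd u) -> RInt Hd 0 1 = H 1 - H 0.
Proof.
  intros Hder Hc.
  set (d0 := (fun x => exist (fun l => derivable_pt_abs H x l) (Hd x) (Hder x)) : derivable H).
  assert (Hc' : continuity (derive H d0)) by exact Hc.
  set (C := @mkC1 H d0 Hc').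
  assert (pr : Riemann_integrable (derive C (diff0 C)) 0 1).
  { apply continuity_implies_RiemannInt; [lra|]. intros; apply (cont1 C). }
  change (RInt (derive C (diff0 C)) 0 1 = C 1 - C 0).
  rewrite (RInt_pr _ _ _ pr). exact (@FTC_Riemann C 0 1 pr).
Qed.

(* It follows by integrating
   the nonnegative function (g u - g v)(k u - k v) m u m v in u and then in v. *)
Lemma chebyshev g k m : cont01 g -> cont01 k -> cont01 m ->
  (forall u, 0 <= u <= 1 -> 0 <= m u) ->
  (forall u v, 0 <= u <= 1 -> 0 <= v <= 1 -> 0 <= (g u - g v) * (k u - k v)) ->
  RInt (fun u => g u * m u) 0 1 * RInt (fun u => k u * m u) 0 1 <=
  RInt (fun u => g u * k u * m u) 0 1 * RInt m 0 1.
Proof.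
  intros Cg Ck Cm Hm Hs.
  set (A := RInt (fun u => g u * k u * m u) 0 1).
  set (B := RInt (fun u => k u * m u) 0 1).
  set (C := RInt (fun u => g u * m u) 0 1).
  set (D := RInt m 0 1).
  assert (Cgkm : cont01 (fun u => g u * k u * m u)) by (repeat apply cont01_mult; auto).
  assert (Ckm : cont01 (fun u => k u * m u)) by (apply cont01_mult; auto).
  assert (Cgm : cont01 (fun u => g u * m u)) by (apply cont01_mult; auto).
  assert (inner : forall v, 0 <= v <= 1 -> 0 <= A - g v * B - k v * C + g v * k v * D).
  { intros v Hv.
    assert (E : RInt (fun u => 1 * (g u * k u * m u) + (- g v) * (k u * m u)
                   + (- k v) * (g u * m u) + (g v * k v) * m u) 0 1 =
                A - g v * B - k v * C + g v * k v * D)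
      by (rewrite RInt_lin4; auto; unfold A, B, C, D; ring).
    rewrite <- E. apply RInt_nonneg.
    - repeat apply cont01_plus; apply cont01_scal; auto.
    - intros u Hu.
      replace (1 * (g u * k u * m u) + - g v * (k u * m u) + - k v * (g u * m u) + g v * k v * m u)
        with ((g u - g v) * (k u - k v) * m u) by ring.
      apply Rmult_le_pos; auto. }
  assert (outer : 0 <= 2 * (A * D - B * C)).
  { replace (2 * (A * D - B * C)) with
      (RInt (fun v => A * m v + (- B) * (g v * m v) + (- C) * (k v * m v)
                      + D * (g v * k v * m v)) 0 1)
      by (rewrite RInt_lin4; auto; fold A B C D; ring).
    apply RInt_nonneg.
    - repeat apply cont01_plus; apply cont01_scal; auto.
    - intros v Hv.
      replace (A * m v + - B * (g v * m v) + - C * (k v * m v) + D * (g v * k v * m v))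
        with (m v * (A - g v * B - k v * C + g v * k v * D)) by ring.
      apply Rmult_le_pos; auto. }
  lra.
Qed.

Lemma dl_eq f x l1 l2 : derivable_pt_lim f x l1 -> l1 = l2 -> derivable_pt_lim f x l2.
Proof. intros H ->; exact H. Qed.
Lemma dl_ext f g x l : derivable_pt_lim f x l -> (forall y, f y = g y) -> derivable_pt_lim g x l.
Proof. intros H E. replace g with f; auto. apply functional_extensionality; auto. Qed.
Lemma dl_const c x : derivable_pt_lim (fun _ => c) x 0.
Proof. apply (derivable_pt_lim_const c). Qed.
Lemma dl_plus f g x lf lg : derivable_pt_lim f x lf -> derivable_pt_lim g x lg ->
  derivable_pt_lim (fun y => f y + g y) x (lf + lg).
Proof. intros; apply (derivable_pt_lim_plus f g); auto. Qed.
Lemma dl_minus f g x lf lg : derivable_pt_lim f x lf -> derivable_pt_lim g x lg ->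
  derivable_pt_lim (fun y => f y - g y) x (lf - lg).
Proof. intros; apply (derivable_pt_lim_minus f g); auto. Qed.
Lemma dl_mult f g x lf lg : derivable_pt_lim f x lf -> derivable_pt_lim g x lg ->
  derivable_pt_lim (fun y => f y * g y) x (lf * g x + f x * lg).
Proof. intros; apply (derivable_pt_lim_mult f g); auto. Qed.
Lemma dl_opp f x lf : derivable_pt_lim f x lf -> derivable_pt_lim (fun y => - f y) x (- lf).
Proof. intros; apply (derivable_pt_lim_opp f); auto. Qed.
Lemma dl_comp (g : R -> R) f x lf lg : derivable_pt_lim f x lf -> derivable_pt_lim g (f x) lg ->
  derivable_pt_lim (fun y => g (f y)) x (lg * lf).
Proof. intros; apply (derivable_pt_lim_comp f g); auto. Qed.
Lemma dl_div f g x lf lg : derivable_pt_lim f x lf -> derivable_pt_lim g x lg -> g x <> 0 ->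
  derivable_pt_lim (fun y => f y / g y) x ((lf * g x - lg * f x) / (g x * g x)).
Proof. intros. apply (derivable_pt_lim_div f g); auto. Qed.
Lemma dl_pow f x lf n : derivable_pt_lim f x lf ->
  derivable_pt_lim (fun y => f y ^ n) x (INR n * f x ^ pred n * lf).
Proof. intros H. apply (dl_comp (fun z => z ^ n) f); auto. apply derivable_pt_lim_pow. Qed.
Lemma dl_sqrt f x lf : 0 < f x -> derivable_pt_lim f x lf ->
  derivable_pt_lim (fun y => sqrt (f y)) x (/ (2 * sqrt (f x)) * lf).
Proof. intros Hp H. apply (dl_comp sqrt f); auto. apply derivable_pt_lim_sqrt; auto. Qed.

Lemma dl_loc f g x l w : 0 < x < w -> (forall s, 0 < s < w -> f s = g s) ->
  derivable_pt_lim f x l -> derivable_pt_lim g x l.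
Proof.
  intros Hx E H eps He. destruct (H eps He) as [d Hd].
  assert (Hp : 0 < Rmin d (Rmin x (w - x))) by (repeat apply Rmin_pos; try lra; apply cond_pos).
  exists (mkposreal _ Hp). intros h Hh0 Hh. simpl in Hh.
  assert (Hm1 := Rmin_l d (Rmin x (w - x))). assert (Hm2 := Rmin_r d (Rmin x (w - x))).
  assert (Hm3 := Rmin_l x (w - x)). assert (Hm4 := Rmin_r x (w - x)).
  assert (Hxh : 0 < x + h < w) by (revert Hh; unfold Rabs; destruct Rcase_abs; lra).
  rewrite <- !E by lra. apply Hd; auto. lra.
Qed.

Lemma dt_within_lim w f t l : 0 < t < w -> dt_within w f t l -> derivable_pt_lim f t l.
Proof.
  intros Ht H eps He. destruct (H eps He) as [d [Hd H2]].
  assert (Hp : 0 < Rmin d (Rmin t (w - t))) by (repeat apply Rmin_pos; lra).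
  exists (mkposreal _ Hp). intros h Hh0 Hh. simpl in Hh.
  assert (Hm1 := Rmin_l d (Rmin t (w - t))). assert (Hm2 := Rmin_r d (Rmin t (w - t))).
  assert (Hm3 := Rmin_l t (w - t)). assert (Hm4 := Rmin_r t (w - t)).
  apply H2; auto; [lra|]. revert Hh; unfold Rabs; destruct Rcase_abs; lra.
Qed.

Lemma mvt_interval (f f' : R -> R) w a b : 0 < a < w -> 0 < b < w ->
  (forall c, 0 < c < w -> derivable_pt_lim f c (f' c)) ->
  exists c, f b - f a = f' c * (b - a) /\ Rabs (c - a) <= Rabs (b - a) /\ 0 < c < w.
Proof.
  intros Ha Hb Hd.
  destruct (Rtotal_order a b) as [Hlt|[Heq|Hgt]].
  - destruct (MVT_cor2 f f' a b Hlt) as [c [H1 H2]]; [intros c Hc; apply Hd; lra|].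
    exists c. split; auto. split; [rewrite !Rabs_right; lra | lra].
  - subst. exists b. split; [ring|]. split; [rewrite Rminus_diag, Rabs_R0; lra|lra].
  - destruct (MVT_cor2 f f' b a Hgt) as [c [H1 H2]]; [intros c Hc; apply Hd; lra|].
    exists c. split; [lra|]. split; [rewrite !Rabs_left; lra | lra].
Qed.

Lemma const_of_zero_deriv (f : R -> R) w :
  (forall s, 0 < s < w -> derivable_pt_lim f s 0) ->
  (forall eps, 0 < eps -> exists del, 0 < del /\
     forall s, 0 < s < w -> s < del -> Rabs (f s - f 0) < eps) ->
  forall t, 0 < t < w -> f t = f 0.
Proof.
  intros Hd Hc t Ht.
  apply NNPP. intro Hne.
  assert (Hpos : 0 < Rabs (f t - f 0)) by (apply Rabs_pos_lt; lra).
  destruct (Hc _ Hpos) as [del [Hdel Hs]].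
  assert (Hs1 := Rmin_l (del / 2) t). assert (Hs2 := Rmin_r (del / 2) t).
  assert (Hs3 : 0 < Rmin (del / 2) t) by (apply Rmin_pos; lra).
  set (s := Rmin (del / 2) t) in *.
  destruct (mvt_interval f (fun _ => 0) w s t ltac:(lra) Ht Hd) as [c [Ec _]].
  assert (E : f t = f s) by lra.
  specialize (Hs s ltac:(lra) ltac:(lra)). rewrite E in Hs. lra.
Qed.

Lemma cont_id x : continuity_pt (fun z => z) x.
Proof. exact (derivable_continuous_pt _ _ (derivable_pt_id x)). Qed.

Lemma cw_const w c u t : cont_within w (fun _ _ => c) u t.
Proof. intros eps He. exists 1. split; [lra|]. intros. rewrite Rminus_diag, Rabs_R0. lra. Qed.

Lemma cw_plus w f g u t : cont_within w f u t -> cont_within w g u t ->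
  cont_within w (fun u t => f u t + g u t) u t.
Proof.
  intros Hf Hg eps He.
  destruct (Hf (eps/2)) as [d1 [Hd1 H1]]; [lra|].
  destruct (Hg (eps/2)) as [d2 [Hd2 H2]]; [lra|].
  exists (Rmin d1 d2). split; [apply Rmin_pos; lra|].
  intros u' t' Hu Ht Hw.
  assert (Hm1 := Rmin_l d1 d2). assert (Hm2 := Rmin_r d1 d2).
  specialize (H1 u' t' ltac:(lra) ltac:(lra) Hw).
  specialize (H2 u' t' ltac:(lra) ltac:(lra) Hw).
  replace (f u' t' + g u' t' - (f u t + g u t)) with ((f u' t' - f u t) + (g u' t' - g u t)) by ring.
  pose proof (Rabs_triang (f u' t' - f u t) (g u' t' - g u t)). lra.
Qed.

Lemma cw_comp w (g : R -> R) f u t : continuity_pt g (f u t) -> cont_within w f u t ->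
  cont_within w (fun u t => g (f u t)) u t.
Proof.
  intros Hg Hf eps He.
  destruct (Hg eps He) as [a [Ha H]].
  destruct (Hf a Ha) as [d [Hd H2]].
  exists d. split; auto. intros u' t' Hu Ht Hw.
  destruct (Req_dec (f u' t') (f u t)) as [E|E].
  - rewrite E, Rminus_diag, Rabs_R0. lra.
  - apply (H (f u' t')). split.
    + unfold D_x, no_cond. split; auto.
    + apply H2; auto.
Qed.

Lemma cw_scal w l f u t : cont_within w f u t -> cont_within w (fun u t => l * f u t) u t.
Proof.
  intro Hf. apply (cw_comp w (fun z => l * z)); auto.
  apply continuity_pt_mult; [apply continuity_pt_const; intros ? ?; reflexivity|apply cont_id].
Qed.

Lemma cw_opp w f u t : cont_within w f u t -> cont_within w (fun u t => - f u t) u t.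
Proof. intro Hf. apply (cw_comp w (fun z => - z)); auto. apply continuity_pt_opp, cont_id. Qed.

Lemma cw_minus w f g u t : cont_within w f u t -> cont_within w g u t ->
  cont_within w (fun u t => f u t - g u t) u t.
Proof. intros Hf Hg. apply cw_plus; auto. apply cw_opp; auto. Qed.

Lemma cw_sqr w f u t : cont_within w f u t -> cont_within w (fun u t => f u t * f u t) u t.
Proof. intro Hf. apply (cw_comp w (fun z => z * z)); auto. apply continuity_pt_mult; apply cont_id. Qed.

(* Products reduce to squares by polarization. *)
Lemma cw_mult w f g u t : cont_within w f u t -> cont_within w g u t ->
  cont_within w (fun u t => f u t * g u t) u t.
Proof.
  intros Hf Hg.
  assert (E : (fun u t => f u t * g u t) = fun u t =>
     / 4 * ((f u t + g u t) * (f u t + g u t)) + (-/4) * ((f u t - g u t) * (f u t - g u t))).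
  { do 2 (apply functional_extensionality; intro). field. }
  rewrite E. apply cw_plus; apply cw_scal; apply cw_sqr; [apply cw_plus | apply cw_minus]; auto.
Qed.

Lemma cw_div w f g u t : g u t <> 0 -> cont_within w f u t -> cont_within w g u t ->
  cont_within w (fun u t => f u t / g u t) u t.
Proof.
  intros Hn Hf Hg. unfold Rdiv. apply cw_mult; auto.
  apply (cw_comp w Rinv); auto. apply continuity_pt_inv; [apply cont_id|auto].
Qed.

Lemma cw_pow w f u t n : cont_within w f u t -> cont_within w (fun u t => f u t ^ n) u t.
Proof.
  intro Hf. apply (cw_comp w (fun z => z ^ n)); auto.
  apply derivable_continuous_pt, derivable_pt_pow.
Qed.

Lemma cw_sqrt w f u t : 0 <= f u t -> cont_within w f u t ->
  cont_within w (fun u t => sqrt (f u t)) u t.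
Proof. intros H0 Hf. apply (cw_comp w sqrt); auto. apply continuity_pt_sqrt; auto. Qed.

Lemma cw_slice w f u t : 0 <= t < w -> cont_within w f u t -> continuity_pt (fun v => f v t) u.
Proof.
  intros Ht Hf eps He. destruct (Hf eps He) as [d [Hd H]].
  exists d. split; auto. intros x [_ Hx]. simpl in *. unfold R_dist in *.
  apply H; auto. rewrite Rminus_diag, Rabs_R0. lra.
Qed.

Lemma finite_min_pos (d : R -> R) (l : list R) :
  (forall x, In x l -> 0 < d x) -> exists m, 0 < m /\ forall x, In x l -> m <= d x.
Proof.
  induction l as [|a l IH]; intros Hin.
  - exists 1. split; [lra|]. intros x [].
  - destruct IH as [m [Hm1 Hm2]]; [intros x Hx; apply Hin; right; exact Hx|].
    assert (Ha : 0 < d a) by (apply Hin; left; auto).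
    exists (Rmin m (d a)). split; [apply Rmin_pos; lra|].
    intros x [<-|Hx]; [apply Rmin_r|]. eapply Rle_trans; [apply Rmin_l|]. auto.
Qed.

(* Uniform continuity in time: if F is jointly continuous at every (u,t) with
   u in [0,1], then F(u,s) -> F(u,t) as s -> t, uniformly in u.  Proof by a
   finite subcover of [0,1] (Borel-Lebesgue). *)
Lemma uniform_cont_in_time (w t : R) (F : R -> R -> R) : 0 <= t < w ->
  (forall u, 0 <= u <= 1 -> cont_within w F u t) ->
  forall eps, 0 < eps -> exists del, 0 < del /\
    forall u s, 0 <= u <= 1 -> Rabs (s - t) < del -> 0 <= s < w ->
      Rabs (F u s - F u t) < eps.
Proof.
  intros Ht Hc eps Heps.
  set (P := fun x d => 0 < d /\ forall u' t', Rabs (u' - x) < d -> Rabs (t' - t) < d ->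
              0 <= t' < w -> Rabs (F u' t' - F x t) < eps / 2).
  set (dl := fun x => epsilon (inhabits 1) (fun d => P x d)).
  assert (Hdl : forall x, 0 <= x <= 1 -> P x (dl x)).
  { intros x Hx. apply (epsilon_spec (inhabits 1) (fun d => P x d)).
    destruct (Hc x Hx (eps/2)) as [d [Hd H]]; [lra|]. exists d. split; auto. }
  set (fam := mkfamily (fun x => 0 <= x <= 1) (fun x y => 0 <= x <= 1 /\ Rabs (y - x) < dl x / 2)
                (fun x (H : exists y, 0 <= x <= 1 /\ Rabs (y - x) < dl x / 2) =>
                   match H with ex_intro _ y Hy => proj1 Hy end)).
  assert (Hcov : covering_open_set (fun c => 0 <= c <= 1) fam).
  { split.
    - intros x Hx. exists x. simpl. split; auto. rewrite Rminus_diag, Rabs_R0.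
      destruct (Hdl x Hx). lra.
    - intros x y [Hx Hy].
      assert (Hr : 0 < dl x / 2 - Rabs (y - x)) by lra.
      exists (mkposreal _ Hr). intros z Hz. unfold disc in Hz. simpl in Hz. simpl. split; auto.
      replace (z - x) with ((z - y) + (y - x)) by ring.
      pose proof (Rabs_triang (z - y) (y - x)). lra. }
  destruct (compact_P3 0 1 fam Hcov) as [D [HcovD [l Hl]]].
  destruct (finite_min_pos (fun x => dl x / 2) l) as [m [Hm1 Hm2]].
  { intros x Hx. apply Hl in Hx. destruct Hx as [Hx _]. destruct (Hdl x Hx). lra. }
  exists m. split; auto.
  intros u s Hu Hs Hsw.
  destruct (HcovD u Hu) as [y [[Hy1 Hy2] HyD]].
  pose proof (Hm2 y ltac:(apply Hl; split; auto)) as Hmy. simpl in Hmy.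
  destruct (Hdl y Hy1) as [Hpos Hyp].
  assert (H1 : Rabs (F u s - F y t) < eps / 2) by (apply Hyp; lra).
  assert (H2 : Rabs (F u t - F y t) < eps / 2).
  { apply Hyp; try lra. rewrite Rminus_diag, Rabs_R0. lra. }
  replace (F u s - F u t) with ((F u s - F y t) + - (F u t - F y t)) by ring.
  pose proof (Rabs_triang (F u s - F y t) (- (F u t - F y t))).
  rewrite Rabs_Ropp in H. lra.
Qed.

Lemma RInt_deriv_param w t (F Ft : R -> R -> R) : 0 < t < w ->
  (forall u s, 0 < s < w -> derivable_pt_lim (fun s => F u s) s (Ft u s)) ->
  (forall u s, 0 < s < w -> continuity_pt (fun v => F v s) u) ->
  (forall u, 0 <= u <= 1 -> cont_within w Ft u t) ->
  derivable_pt_lim (fun s => RInt (fun u => F u s) 0 1) t (RInt (fun u => Ft u t) 0 1).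
Proof.
  intros Ht Hd Hc Hcw eps He.
  destruct (uniform_cont_in_time w t Ft ltac:(lra) Hcw (eps/2) ltac:(lra)) as [del [Hdel Hu]].
  assert (Hp : 0 < Rmin del (Rmin t (w - t))) by (repeat apply Rmin_pos; lra).
  exists (mkposreal _ Hp). intros h Hh0 Hh. simpl in Hh.
  assert (Hm1 := Rmin_l del (Rmin t (w - t))).
  assert (Hm2 := Rmin_r del (Rmin t (w - t))).
  assert (Hm3 := Rmin_l t (w - t)). assert (Hm4 := Rmin_r t (w - t)).
  assert (Hth : 0 < t + h < w) by (revert Hh; unfold Rabs; destruct Rcase_abs; lra).
  assert (C1 : cont01 (fun u => F u (t + h))) by (intros u _; apply Hc; lra).
  assert (C2 : cont01 (fun u => F u t)) by (intros u _; apply Hc; lra).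
  assert (C3 : cont01 (fun u => Ft u t)) by (intros u Hu'; apply (cw_slice w); [lra|auto]).
  set (g := fun u => / h * F u (t + h) + (- / h) * F u t + (-1) * Ft u t).
  assert (E : (RInt (fun u => F u (t + h)) 0 1 - RInt (fun u => F u t) 0 1) / h
              - RInt (fun u => Ft u t) 0 1 = RInt g 0 1).
  { unfold g.
    rewrite RInt_plus; [|apply cont01_plus; apply cont01_scal; auto|apply cont01_scal; auto].
    rewrite RInt_plus by (apply cont01_scal; auto).
    rewrite !RInt_scal by auto. field. auto. }
  rewrite E. apply Rle_lt_trans with (eps / 2); [|lra].
  apply RInt_bound.
  { unfold g. apply cont01_plus; [apply cont01_plus|]; apply cont01_scal; auto. }
  (* pointwise, the integrand is Ft u c - Ft u t for an intermediate time c *)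
  intros u Hu'.
  destruct (mvt_interval (fun s => F u s) (fun s => Ft u s) w t (t + h) ltac:(lra) Hth)
    as [c [Hc1 [Hc2 Hc3]]]; [intros c Hc'; apply Hd; auto|].
  replace (t + h - t) with h in Hc1, Hc2 by ring.
  assert (Eg : g u = Ft u c - Ft u t).
  { unfold g. replace (/ h * F u (t + h) + - / h * F u t) with ((F u (t + h) - F u t) / h)
      by (field; auto).
    rewrite Hc1. field; auto. }
  rewrite Eg. left. apply Hu; auto; lra.
Qed.

Lemma RInt_cont_param w t (F : R -> R -> R) : 0 <= t < w ->
  (forall u, 0 <= u <= 1 -> cont_within w F u t) ->
  (forall u s, 0 <= s < w -> continuity_pt (fun v => F v s) u) ->
  forall eps, 0 < eps -> exists del, 0 < del /\ forall s, Rabs (s - t) < del -> 0 <= s < w ->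
    Rabs (RInt (fun u => F u s) 0 1 - RInt (fun u => F u t) 0 1) < eps.
Proof.
  intros Ht Hcw Hc eps He.
  destruct (uniform_cont_in_time w t F Ht Hcw (eps/2) ltac:(lra)) as [del [Hdel Hu]].
  exists del. split; auto. intros s Hs Hsw.
  rewrite <- RInt_minus by (intros u _; apply Hc; lra).
  apply Rle_lt_trans with (eps/2); [|lra].
  apply RInt_bound; [apply cont01_minus; intros u _; apply Hc; lra|].
  intros u Hu'. left. apply Hu; auto.
Qed.

Lemma cont01_of_cw w (F : R -> R -> R) t : 0 <= t < w -> (forall u, cont_within w F u t) ->
  cont01 (fun u => F u t).
Proof. intros Ht H u _. apply (cw_slice w); auto. Qed.

Lemma limit0_eventually_below (A : R -> R) w :
  limit1_in A (fun t => 0 <= t < w) 0 w ->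
  forall t0 m, 0 <= t0 < w -> 0 < m -> exists s, t0 < s < w /\ Rabs (A s) < m.
Proof.
  intros Hlim t0 m Ht0 Hm.
  destruct (Hlim m Hm) as [alp [Halp H]]. simpl in H. unfold R_dist in H.
  assert (Hn1 := Rmax_l t0 (w - alp / 2)). assert (Hn2 := Rmax_r t0 (w - alp / 2)).
  assert (Hnw : Rmax t0 (w - alp / 2) < w) by (apply Rmax_lub_lt; lra).
  set (s := (Rmax t0 (w - alp / 2) + w) / 2).
  exists s. split; [unfold s; lra|].
  specialize (H s). rewrite Rminus_0_r in H.
  apply H. split; [unfold s; lra|]. rewrite Rabs_left; unfold s; lra.
Qed.

(* The pointwise inequality behind the monotonicity of
   Phi = L^2/A - (eps/pi) ln A: with L' = -q, A' = -p, p k <= 2 pi q and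
   L (k - pi L / A) >= eps, the derivative of Phi is nonpositive. *)
Lemma lyapunov_deriv_nonpos a l p q k eps :
  0 < a -> 0 < l -> 0 < p -> p * k <= q * (2 * PI) -> eps <= l * (k - PI * l / a) ->
  ((2 * l * - q) * a - l * l * - p) / (a * a) - eps / PI * (- p / a) <= 0.
Proof.
  intros Ha Hl Hp Hch Hge. assert (HPI := PI_RGT_0).
  replace (((2 * l * - q) * a - l * l * - p) / (a * a) - eps / PI * (- p / a)) with
    ((l / (a * a)) * (- 2 * a * q + l * p) + eps * p / (PI * a)) by (field; lra).
  assert (Hq : - 2 * a * q <= - a * p * k / PI).
  { assert (a * (p * k) <= a * (q * (2 * PI))) by (apply Rmult_le_compat_l; lra).
    replace (- a * p * k / PI) with
      (-2 * a * q + (a * (q * (2 * PI)) - a * (p * k)) / PI) by (field; lra).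
    assert (0 <= (a * (q * (2 * PI)) - a * (p * k)) / PI).
    { apply Rmult_le_pos; [lra|]. apply Rlt_le, Rinv_0_lt_compat; lra. }
    lra. }
  apply Rle_trans with (l / (a * a) * (- a * p * k / PI + l * p) + eps * p / (PI * a)).
  - apply Rplus_le_compat_r. apply Rmult_le_compat_l; [apply Rlt_le, Rdiv_lt_0_compat; nra | lra].
  - replace (l / (a * a) * (- a * p * k / PI + l * p) + eps * p / (PI * a)) with
      (p / (PI * a) * (eps - l * (k - PI * l / a))) by (field; lra).
    assert (0 <= p / (PI * a)) by (apply Rlt_le, Rdiv_lt_0_compat; nra). nra.
Qed.

(* The abstract form of the lemma: the length L, area A, int k^2 ds (K2),
   P = int G(k) k ds and Q = int G(k) k^2 ds only enter through
   L' = -Q, A' = -P, L > 0, P > 0, the Chebyshev bound P K2 <= 2 pi Q and A -> 0. *)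
Section EvolutionInequality.
Variables (w : R) (L A K2 P Q : R -> R).
Hypothesis L_deriv : forall t, 0 < t < w -> derivable_pt_lim L t (- Q t).
Hypothesis A_deriv : forall t, 0 < t < w -> derivable_pt_lim A t (- P t).
Hypothesis L_pos : forall t, 0 < t < w -> 0 < L t.
Hypothesis P_pos : forall t, 0 < t < w -> 0 < P t.
Hypothesis chebyshev_bound : forall t, 0 < t < w -> P t * K2 t <= Q t * (2 * PI).
Hypothesis A_limit : limit1_in A (fun t => 0 <= t < w) 0 w.

Lemma A_decreasing s t : 0 < s < w -> 0 < t < w -> s < t -> A t < A s.
Proof.
  intros Hs Ht Hst.
  destruct (MVT_cor2 A (fun c => - P c) s t Hst) as [c [Hc1 Hc2]];
    [intros c Hc; apply A_deriv; lra|].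
  assert (0 < P c) by (apply P_pos; lra). nra.
Qed.

(* A decreases to 0, hence stays positive. *)
Lemma A_pos t : 0 < t < w -> 0 < A t.
Proof.
  intros Ht. apply Rnot_le_lt. intro Hle.
  set (t' := (t + w) / 2).
  assert (H1 : A t' < A t) by (apply A_decreasing; unfold t'; lra).
  destruct (limit0_eventually_below A w A_limit t' (- A t')) as [s [Hs Has]];
    [unfold t'; lra | lra |].
  assert (A s < A t') by (apply A_decreasing; unfold t' in *; lra).
  revert Has. unfold Rabs. destruct Rcase_abs; lra.
Qed.

Definition lyapunov (eps t : R) := L t * L t / A t - eps / PI * ln (A t).

Lemma lyapunov_deriv eps t : 0 < t < w ->
  derivable_pt_lim (lyapunov eps) t
    (((2 * L t * - Q t) * A t - L t * L t * - P t) / (A t * A t) - eps / PI * (- P t / A t)).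
Proof.
  intros Ht. pose proof (A_pos t Ht) as HAt. unfold lyapunov.
  apply (derivable_pt_lim_minus (fun t => L t * L t / A t) (fun t => eps / PI * ln (A t))).
  - replace ((2 * L t * - Q t * A t - L t * L t * - P t) / (A t * A t))
      with (((- Q t * L t + L t * - Q t) * A t - - P t * (L t * L t)) / (A t)²)
      by (unfold Rsqr; field; lra).
    apply (derivable_pt_lim_div (fun t => L t * L t) A);
      [apply (derivable_pt_lim_mult L L)| |]; auto; lra.
  - apply (derivable_pt_lim_scal (fun t => ln (A t))).
    replace (- P t / A t) with (/ A t * (- P t)) by (field; lra).
    apply (derivable_pt_lim_comp A ln); auto. apply derivable_pt_lim_ln; auto.
Qed.

(* If L (K2 - pi L / A) >= eps on (t1, w), the Lyapunov function is
   nonincreasing there, which keeps A away from 0. *)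
Lemma A_bounded_below eps t1 : 0 < eps -> 0 < t1 < w ->
  (forall t, t1 <= t < w -> eps <= L t * (K2 t - PI * L t / A t)) ->
  exists m, 0 < m /\ forall t, t1 < t < w -> m < A t.
Proof.
  intros Heps Ht1 Hge. assert (HPI := PI_RGT_0).
  assert (Hmono : forall t, t1 < t < w -> lyapunov eps t <= lyapunov eps t1).
  { intros t Ht.
    set (dPhi := fun c => ((2 * L c * - Q c) * A c - L c * L c * - P c) / (A c * A c)
                          - eps / PI * (- P c / A c)).
    destruct (MVT_cor2 (lyapunov eps) dPhi t1 t ltac:(lra)) as [c [Hc1 Hc2]];
      [intros c Hc; apply lyapunov_deriv; lra|].
    assert (Hc : 0 < c < w) by lra.
    assert (dPhi c <= 0).
    { apply (lyapunov_deriv_nonpos _ _ _ _ (K2 c)); auto using A_pos. apply Hge; lra. }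
    nra. }
  exists (exp (- lyapunov eps t1 * PI / eps)). split; [apply exp_pos|].
  intros t Ht. pose proof (Hmono t Ht) as H. unfold lyapunov at 1 in H.
  assert (Ht0 : 0 < t < w) by lra.
  pose proof (A_pos t Ht0) as Ha. pose proof (L_pos t Ht0) as Hl.
  assert (0 < L t * L t / A t) by (apply Rdiv_lt_0_compat; nra).
  rewrite <- (exp_ln (A t)) by lra. apply exp_increasing.
  apply Rmult_lt_reg_r with (eps / PI); [apply Rdiv_lt_0_compat; lra|].
  replace (- lyapunov eps t1 * PI / eps * (eps / PI)) with (- lyapunov eps t1) by (field; lra).
  lra.
Qed.

Lemma liminf_bound_of_evolution :
  0 < w -> liminf_left_le (fun t => L t * (K2 t - PI * L t / A t)) w 0.
Proof.
  intros Hw eps del Heps Hdel.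
  apply NNPP. intro Hno.
  assert (Hm1 := Rmax_l (w - del) 0). assert (Hm2 := Rmax_r (w - del) 0).
  assert (Hmw : Rmax (w - del) 0 < w) by (apply Rmax_lub_lt; lra).
  set (t1 := (Rmax (w - del) 0 + w) / 2).
  destruct (A_bounded_below eps t1 Heps) as [m [Hm Hbig]]; [unfold t1; lra| |].
  - intros t Ht. apply Rnot_lt_le. intro Hlt. apply Hno. exists t.
    unfold t1 in Ht. split; [lra|]. split; lra.
  - destruct (limit0_eventually_below A w A_limit t1 m) as [s [Hs Has]];
      [unfold t1; lra | exact Hm |].
    specialize (Hbig s Hs). revert Has. unfold Rabs. destruct Rcase_abs; lra.
Qed.

End EvolutionInequality.

Lemma deriv_periodic (g : R -> R) x l : (forall v, g (v + 1) = g v) ->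
  derivable_pt_lim g (x + 1) l -> derivable_pt_lim g x l.
Proof.
  intros Hg H eps He. destruct (H eps He) as [d Hd]. exists d. intros h Hh0 Hh.
  specialize (Hd h Hh0 Hh). rewrite <- (Hg x), <- (Hg (x + h)).
  replace (x + h + 1) with (x + 1 + h) by ring. exact Hd.
Qed.

Section SmoothFlow.
Variables (w : R) (f : R -> R -> R) (D : nat -> nat -> R -> R -> R).
Hypothesis D_base : forall u t, 0 <= t < w -> D 0%nat 0%nat u t = f u t.
Hypothesis D_u : forall i j u t, 0 <= t < w ->
  derivable_pt_lim (fun v => D i j v t) u (D (S i) j u t).
Hypothesis D_t : forall i j u t, 0 <= t < w ->
  dt_within w (fun s => D i j u s) t (D i (S j) u t).

Lemma flow_du1 u t : 0 <= t < w -> Dr (fun v => f v t) u = D 1%nat 0%nat u t.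
Proof. intro Ht. apply Dr_eq. apply (dl_ext (fun v => D 0%nat 0%nat v t)); auto. Qed.

Lemma flow_du2 u t : 0 <= t < w -> Dr (fun v => Dr (fun v' => f v' t) v) u = D 2%nat 0%nat u t.
Proof.
  intro Ht. apply Dr_eq. apply (dl_ext (fun v => D 1%nat 0%nat v t)); auto.
  intro y. symmetry. apply flow_du1; auto.
Qed.

Lemma flow_dt i j u t : 0 < t < w -> derivable_pt_lim (fun s => D i j u s) t (D i (S j) u t).
Proof. intro Ht. apply (dt_within_lim w); auto. apply D_t. lra. Qed.

Lemma flow_dt1 u t : 0 < t < w -> Dr (fun s => f u s) t = D 0%nat 1%nat u t.
Proof.
  intro Ht. apply Dr_eq. apply (dl_loc (fun s => D 0%nat 0%nat u s) _ _ _ w); auto.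
  - intros s Hs; apply D_base; lra.
  - apply flow_dt; auto.
Qed.

Hypothesis f_periodic : forall u t, 0 <= t < w -> f (u + 1) t = f u t.

(* By induction on the orders: time derivatives are limits of periodic
   quotients, and u-derivatives use [deriv_periodic]. *)
Lemma flow_periodic : forall i j u t, 0 < t < w -> D i j (u + 1) t = D i j u t.
Proof.
  assert (step_t : forall i j, (forall u t, 0 < t < w -> D i j (u + 1) t = D i j u t) ->
                 forall u t, 0 < t < w -> D i (S j) (u + 1) t = D i (S j) u t).
  { intros i j IH u t Htw. eapply uniqueness_limite.
    - apply flow_dt; auto.
    - apply (dl_loc (fun s => D i j u s) _ _ _ w); auto.
      + intros s Hs. symmetry. apply IH; auto.
      + apply flow_dt; auto. }
  assert (step_u : forall i j, (forall u t, 0 < t < w -> D i j (u + 1) t = D i j u t) ->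
                 forall u t, 0 < t < w -> D (S i) j (u + 1) t = D (S i) j u t).
  { intros i j IH u t Htw. apply (uniqueness_limite (fun v => D i j v t) u).
    - apply deriv_periodic; [intro v; apply IH; auto | apply D_u; lra].
    - apply D_u; lra. }
  intros i. induction i as [|i IHi].
  - intros j. induction j as [|j IHj].
    + intros u t Htw. rewrite !D_base by lra. apply f_periodic; lra.
    + apply step_t; auto.
  - intros j. apply step_u. apply IHi.
Qed.

End SmoothFlow.

Lemma nondecreasing_of_nonneg_deriv (G G1 : R -> R) :
  (forall x, 0 < x -> derivable_pt_lim G x (G1 x) /\ 0 <= G1 x) ->
  forall x y, 0 < x -> x <= y -> G x <= G y.
Proof.
  intros HG x y Hx Hxy. destruct (Req_dec x y) as [->|Hne]; [lra|].
  destruct (MVT_cor2 G G1 x y ltac:(lra)) as [c [Hc1 Hc2]]; [intros c Hc; apply HG; lra|].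
  destruct (HG c ltac:(lra)) as [_ Hg]. nra.
Qed.

Section Flow.
Variables (G G1 : R -> R) (w : R) (gx gy : R -> R -> R) (Dx Dy : nat -> nat -> R -> R -> R).
Hypothesis Dx_base : forall u t, 0 <= t < w -> Dx 0%nat 0%nat u t = gx u t.
Hypothesis Dx_u : forall i j u t, 0 <= t < w ->
  derivable_pt_lim (fun v => Dx i j v t) u (Dx (S i) j u t).
Hypothesis Dx_t : forall i j u t, 0 <= t < w ->
  dt_within w (fun s => Dx i j u s) t (Dx i (S j) u t).
Hypothesis Dx_cont : forall i j u t, 0 <= t < w -> cont_within w (Dx i j) u t.
Hypothesis Dy_base : forall u t, 0 <= t < w -> Dy 0%nat 0%nat u t = gy u t.
Hypothesis Dy_u : forall i j u t, 0 <= t < w ->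
  derivable_pt_lim (fun v => Dy i j v t) u (Dy (S i) j u t).
Hypothesis Dy_t : forall i j u t, 0 <= t < w ->
  dt_within w (fun s => Dy i j u s) t (Dy i (S j) u t).
Hypothesis Dy_cont : forall i j u t, 0 <= t < w -> cont_within w (Dy i j) u t.
Hypothesis periodic : forall u t, 0 <= t < w -> gx (u + 1) t = gx u t /\ gy (u + 1) t = gy u t.
Hypothesis speed_pos : forall u t, 0 <= t < w -> 0 < speed gx gy u t.
Hypothesis curv_pos : forall u t, 0 <= t < w -> 0 < curv gx gy u t.
Hypothesis flow_eq : forall u t, 0 < t < w ->
  xt gx u t = G (curv gx gy u t) * curv gx gy u t * Nx gx gy u t /\
  yt gy u t = G (curv gx gy u t) * curv gx gy u t * Ny gx gy u t.
Hypothesis G_props : forall x, 0 < x -> derivable_pt_lim G x (G1 x) /\ 0 < G x /\ 0 <= G1 x.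

Definition gxu u t := Dx 1%nat 0%nat u t.
Definition gyu u t := Dy 1%nat 0%nat u t.
Definition gxuu u t := Dx 2%nat 0%nat u t.
Definition gyuu u t := Dy 2%nat 0%nat u t.
Definition spd2 u t := gxu u t ^ 2 + gyu u t ^ 2.
Definition spd u t := sqrt (spd2 u t).
Definition wedge u t := gxu u t * gyuu u t - gyu u t * gxuu u t.
Definition kap u t := wedge u t / spd u t ^ 3.

Lemma speed_eq u t : 0 <= t < w -> speed gx gy u t = spd u t.
Proof.
  intro Ht. unfold speed, xu, yu, spd, spd2, gxu, gyu.
  rewrite (flow_du1 w gx Dx), (flow_du1 w gy Dy); auto.
Qed.

Lemma curv_eq u t : 0 <= t < w -> curv gx gy u t = kap u t.
Proof.
  intro Ht. unfold curv, kap, wedge. rewrite speed_eq by auto. unfold xuu, yuu, xu, yu.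
  rewrite (flow_du1 w gx Dx), (flow_du1 w gy Dy), (flow_du2 w gx Dx), (flow_du2 w gy Dy); auto.
Qed.

Lemma spd_pos u t : 0 <= t < w -> 0 < spd u t.
Proof. intro Ht. rewrite <- speed_eq; auto. Qed.
Lemma kap_pos u t : 0 <= t < w -> 0 < kap u t.
Proof. intro Ht. rewrite <- curv_eq; auto. Qed.
Lemma spd2_sqr u t : spd2 u t = spd u t * spd u t.
Proof. unfold spd. rewrite sqrt_sqrt; auto. unfold spd2. nra. Qed.
Lemma spd2_pos u t : 0 <= t < w -> 0 < spd2 u t.
Proof. intro Ht. rewrite spd2_sqr. pose proof (spd_pos u t Ht). nra. Qed.

Definition P_dens u t := G (kap u t) * kap u t * spd u t.
Definition Q_dens u t := G (kap u t) * kap u t ^ 2 * spd u t.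

Lemma cw_spd2 u t : 0 <= t < w -> cont_within w spd2 u t.
Proof. intro. unfold spd2, gxu, gyu. apply cw_plus; apply cw_pow; auto. Qed.
Lemma cw_spd u t : 0 <= t < w -> cont_within w spd u t.
Proof. intro. unfold spd. apply cw_sqrt; [left; apply spd2_pos; auto|apply cw_spd2; auto]. Qed.
Lemma cw_wedge u t : 0 <= t < w -> cont_within w wedge u t.
Proof. intro. unfold wedge, gxu, gyu, gxuu, gyuu. apply cw_minus; apply cw_mult; auto. Qed.
Lemma cw_kap u t : 0 <= t < w -> cont_within w kap u t.
Proof.
  intro Ht. unfold kap. apply cw_div; auto using cw_wedge, cw_pow, cw_spd.
  pose proof (spd_pos u t Ht). apply pow_nonzero. lra.
Qed.
Lemma cw_Gkap u t : 0 <= t < w -> cont_within w (fun u t => G (kap u t)) u t.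
Proof.
  intro Ht. apply (cw_comp w G kap); [|apply cw_kap; auto].
  destruct (G_props (kap u t) (kap_pos u t Ht)) as [Hd _].
  apply derivable_continuous_pt. exists (G1 (kap u t)). exact Hd.
Qed.
Lemma cw_P_dens u t : 0 <= t < w -> cont_within w P_dens u t.
Proof. intro. apply cw_mult; [apply cw_mult|]; auto using cw_Gkap, cw_kap, cw_spd. Qed.
Lemma cw_Q_dens u t : 0 <= t < w -> cont_within w Q_dens u t.
Proof. intro. apply cw_mult; [apply cw_mult|]; auto using cw_Gkap, cw_pow, cw_kap, cw_spd. Qed.

Ltac cwt := repeat first
  [ apply cw_wedge | apply cw_spd2 | apply cw_spd | apply cw_const | apply Dx_cont | apply Dy_cont
  | apply cw_minus | apply cw_plus | apply cw_mult ]; auto.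

Lemma Dx_dt i j u s : 0 < s < w -> derivable_pt_lim (fun s => Dx i j u s) s (Dx i (S j) u s).
Proof. intro Hs. apply (dt_within_lim w); [auto|apply Dx_t; lra]. Qed.
Lemma Dy_dt i j u s : 0 < s < w -> derivable_pt_lim (fun s => Dy i j u s) s (Dy i (S j) u s).
Proof. intro Hs. apply (dt_within_lim w); [auto|apply Dy_t; lra]. Qed.

Lemma Dx_per i j u t : 0 < t < w -> Dx i j (u + 1) t = Dx i j u t.
Proof. intro. apply (flow_periodic w gx Dx); auto. intros; apply periodic; auto. Qed.
Lemma Dy_per i j u t : 0 < t < w -> Dy i j (u + 1) t = Dy i j u t.
Proof. intro. apply (flow_periodic w gy Dy); auto. intros; apply periodic; auto. Qed.

(* The evolution equation in coordinates: gamma_t = coef * J gamma_u with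
   coef = G(k) k / |gamma_u|. *)
Definition coef u t := G (kap u t) * kap u t / spd u t.

Lemma gx_dt u t : 0 < t < w -> Dx 0%nat 1%nat u t = - coef u t * gyu u t.
Proof.
  intro Ht. rewrite <- (flow_dt1 w gx Dx) by auto. fold (xt gx u t).
  destruct (flow_eq u t Ht) as [E _]. rewrite E. unfold Nx, yu.
  rewrite curv_eq, speed_eq, (flow_du1 w gy Dy) by (auto; lra).
  unfold coef, gyu. pose proof (spd_pos u t ltac:(lra)). field. lra.
Qed.

Lemma gy_dt u t : 0 < t < w -> Dy 0%nat 1%nat u t = coef u t * gxu u t.
Proof.
  intro Ht. rewrite <- (flow_dt1 w gy Dy) by auto. fold (yt gy u t).
  destruct (flow_eq u t Ht) as [_ E]. rewrite E. unfold Ny, xu.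
  rewrite curv_eq, speed_eq, (flow_du1 w gx Dx) by (auto; lra).
  unfold coef, gxu. pose proof (spd_pos u t ltac:(lra)). field. lra.
Qed.

(* coef is differentiable in u, so the mixed derivatives gamma_ut can be
   computed from the evolution equation. *)
Lemma coef_du u t : 0 <= t < w -> exists l, derivable_pt_lim (fun v => coef v t) u l.
Proof.
  intro Ht. pose proof (spd_pos u t Ht) as Hsp.
  assert (dspd : exists l, derivable_pt_lim (fun v => spd v t) u l).
  { eexists. unfold spd. apply dl_sqrt; [apply spd2_pos; auto|].
    unfold spd2, gxu, gyu. apply dl_plus; apply dl_pow; [apply Dx_u|apply Dy_u]; auto. }
  destruct dspd as [ds Hds].
  assert (dkap : exists k, derivable_pt_lim (fun v => kap v t) u k).
  { eexists. unfold kap, wedge. apply dl_div.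
    - apply dl_minus; apply dl_mult; first [apply Dx_u | apply Dy_u]; auto.
    - apply dl_pow; exact Hds.
    - apply pow_nonzero; lra. }
  destruct dkap as [k Hkd].
  eexists. unfold coef. apply dl_div; [apply dl_mult| |]; eauto; [|lra].
  apply (dl_comp G (fun v => kap v t)); eauto. apply G_props, kap_pos; auto.
Qed.

Lemma gxu_dt u t l : 0 < t < w -> derivable_pt_lim (fun v => coef v t) u l ->
  Dx 1%nat 1%nat u t = - (l * gyu u t + coef u t * gyuu u t).
Proof.
  intros Ht Hl. apply (uniqueness_limite (fun v => Dx 0%nat 1%nat v t) u); [apply Dx_u; lra|].
  apply (dl_ext (fun v => - coef v t * gyu v t)).
  - eapply dl_eq; [apply dl_mult; [apply dl_opp; exact Hl | apply Dy_u; lra] | unfold gyuu; ring].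
  - intro y. symmetry. apply gx_dt; auto.
Qed.

Lemma gyu_dt u t l : 0 < t < w -> derivable_pt_lim (fun v => coef v t) u l ->
  Dy 1%nat 1%nat u t = l * gxu u t + coef u t * gxuu u t.
Proof.
  intros Ht Hl. apply (uniqueness_limite (fun v => Dy 0%nat 1%nat v t) u); [apply Dy_u; lra|].
  apply (dl_ext (fun v => coef v t * gxu v t)).
  - eapply dl_eq; [apply dl_mult; [exact Hl | apply Dx_u; lra] | unfold gxuu; ring].
  - intro y. symmetry. apply gy_dt; auto.
Qed.

(* Time derivative of the speed: |gamma_u|_t = <gamma_u, gamma_ut>/|gamma_u|,
   which along the flow equals -G(k) k^2 |gamma_u| (first variation of length). *)
Definition spd_t u s := (gxu u s * Dx 1%nat 1%nat u s + gyu u s * Dy 1%nat 1%nat u s) / spd u s.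

Lemma spd_dt u s : 0 < s < w -> derivable_pt_lim (fun s => spd u s) s (spd_t u s).
Proof.
  intro Hs. pose proof (spd_pos u s ltac:(lra)).
  eapply dl_eq.
  - unfold spd. apply dl_sqrt; [apply spd2_pos; lra|]. unfold spd2.
    apply dl_plus; apply dl_pow; [apply Dx_dt|apply Dy_dt]; auto.
  - unfold spd_t. fold (spd2 u s) (spd u s). unfold gxu, gyu. simpl. field. lra.
Qed.

Lemma spd_t_eq u t : 0 < t < w -> spd_t u t = - Q_dens u t.
Proof.
  intro Ht. destruct (coef_du u t ltac:(lra)) as [l Hl].
  unfold spd_t. rewrite (gxu_dt u t l), (gyu_dt u t l) by auto.
  pose proof (spd_pos u t ltac:(lra)).
  unfold Q_dens, coef, kap, wedge. field. lra.
Qed.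

Lemma cw_spd_t u t : 0 <= t < w -> cont_within w spd_t u t.
Proof. intro Ht. unfold spd_t, gxu, gyu. apply cw_div; [pose proof (spd_pos u t Ht); lra| |]; cwt. Qed.

Definition area_dens u s := Dx 0%nat 0%nat u s * gyu u s - Dy 0%nat 0%nat u s * gxu u s.
Definition area_dens_t u s := Dx 0%nat 1%nat u s * gyu u s + Dx 0%nat 0%nat u s * Dy 1%nat 1%nat u s
   - (Dy 0%nat 1%nat u s * gxu u s + Dy 0%nat 0%nat u s * Dx 1%nat 1%nat u s).

Lemma area_dens_dt u s : 0 < s < w ->
  derivable_pt_lim (fun s => area_dens u s) s (area_dens_t u s).
Proof.
  intro Hs. eapply dl_eq.
  - unfold area_dens, gxu, gyu. apply dl_minus; apply dl_mult; first [apply Dx_dt|apply Dy_dt]; auto.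
  - unfold area_dens_t, gxu, gyu. ring.
Qed.

Lemma cw_area_dens u t : 0 <= t < w -> cont_within w area_dens u t.
Proof. intro. unfold area_dens, gxu, gyu. cwt. Qed.
Lemma cw_area_dens_t u t : 0 <= t < w -> cont_within w area_dens_t u t.
Proof. intro. unfold area_dens_t, gxu, gyu. cwt. Qed.

Lemma area_normal_eq u t : 0 < t < w ->
  gyu u t * Dx 0%nat 1%nat u t - gxu u t * Dy 0%nat 1%nat u t = - P_dens u t.
Proof.
  intro Ht. rewrite gx_dt, gy_dt by auto.
  pose proof (spd_pos u t ltac:(lra)).
  replace (gyu u t * (- coef u t * gyu u t) - gxu u t * (coef u t * gxu u t))
    with (- coef u t * spd2 u t) by (unfold spd2; ring).
  rewrite spd2_sqr. unfold P_dens, coef. field. lra.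
Qed.

(* First variation of area: the u-exact part of the time derivative of the
   density integrates to 0 by periodicity, leaving int area_dens_t = -2 P. *)
Lemma RInt_area_dens_t t : 0 < t < w ->
  RInt (fun u => area_dens_t u t) 0 1 = -2 * RInt (fun u => P_dens u t) 0 1.
Proof.
  intro Ht. assert (Ht' : 0 <= t < w) by lra.
  set (H := fun v => Dx 0%nat 0%nat v t * Dy 0%nat 1%nat v t - Dy 0%nat 0%nat v t * Dx 0%nat 1%nat v t).
  set (Hd := fun v t => gxu v t * Dy 0%nat 1%nat v t + Dx 0%nat 0%nat v t * Dy 1%nat 1%nat v t
                      - (gyu v t * Dx 0%nat 1%nat v t + Dy 0%nat 0%nat v t * Dx 1%nat 1%nat v t)).
  assert (Hder : forall v, derivable_pt_lim H v (Hd v t)).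
  { intro v. eapply dl_eq.
    - unfold H. apply dl_minus; apply dl_mult; first [apply Dx_u|apply Dy_u]; auto.
    - unfold Hd, gxu, gyu. ring. }
  assert (Hc : forall v, cont_within w Hd v t) by (intro v; unfold Hd, gxu, gyu; cwt).
  assert (exact_part : RInt (fun v => Hd v t) 0 1 = 0).
  { rewrite (RInt_derive H _ Hder (fun v => cw_slice w Hd v t Ht' (Hc v))).
    unfold H. replace 1 with (0 + 1) by ring. rewrite !Dx_per, !Dy_per by auto. ring. }
  assert (Ef : (fun u => area_dens_t u t) = fun u => (-2) * P_dens u t + Hd u t).
  { apply functional_extensionality. intro u.
    replace (-2 * P_dens u t) with (2 * (- P_dens u t)) by ring.
    rewrite <- (area_normal_eq u t Ht). unfold area_dens_t, Hd. ring. }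
  assert (CP : cont01 (fun u => P_dens u t)) by (apply (cont01_of_cw w); auto using cw_P_dens).
  rewrite Ef, RInt_plus, RInt_scal, exact_part; auto using cont01_scal.
  - ring.
  - apply (cont01_of_cw w Hd); auto.
Qed.

(* Total curvature: the density k |gamma_u| = (gamma_u x gamma_uu)/|gamma_u|^2,
   whose time derivative is the u-derivative of a periodic function. *)
Definition turn_dens u s := wedge u s / spd2 u s.
Definition turn_dens_t u s := ((Dx 1%nat 1%nat u s * gyuu u s + gxu u s * Dy 2%nat 1%nat u s
   - (Dy 1%nat 1%nat u s * gxuu u s + gyu u s * Dx 2%nat 1%nat u s)) * spd2 u s
   - (2 * gxu u s * Dx 1%nat 1%nat u s + 2 * gyu u s * Dy 1%nat 1%nat u s) * wedge u s)
   / (spd2 u s * spd2 u s).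

Lemma turn_dens_dt u s : 0 < s < w ->
  derivable_pt_lim (fun s => turn_dens u s) s (turn_dens_t u s).
Proof.
  intro Hs. pose proof (spd2_pos u s ltac:(lra)).
  eapply dl_eq.
  - unfold turn_dens, wedge, spd2, gxu, gyu, gxuu, gyuu. apply dl_div.
    + apply dl_minus; apply dl_mult; first [apply Dx_dt|apply Dy_dt]; auto.
    + apply dl_plus; apply dl_pow; first [apply Dx_dt|apply Dy_dt]; auto.
    + fold (gxu u s) (gyu u s) (spd2 u s). lra.
  - unfold turn_dens_t, wedge, spd2, gxu, gyu, gxuu, gyuu. simpl. field.
    fold (gxu u s) (gyu u s). unfold spd2 in H. nra.
Qed.

Lemma cw_turn_dens u t : 0 <= t < w -> cont_within w turn_dens u t.
Proof.
  intro Ht. unfold turn_dens. apply cw_div; auto using cw_wedge, cw_spd2.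
  pose proof (spd2_pos u t Ht); lra.
Qed.
Lemma cw_turn_dens_t u t : 0 <= t < w -> cont_within w turn_dens_t u t.
Proof.
  intro Ht. unfold turn_dens_t. apply cw_div.
  - pose proof (spd2_pos u t Ht). nra.
  - apply cw_minus; apply cw_mult; cwt.
  - cwt.
Qed.

Lemma RInt_turn_dens_t t : 0 < t < w -> RInt (fun u => turn_dens_t u t) 0 1 = 0.
Proof.
  intro Ht. assert (Ht' : 0 <= t < w) by lra.
  set (H := fun v => (gxu v t * Dy 1%nat 1%nat v t - gyu v t * Dx 1%nat 1%nat v t) / spd2 v t).
  assert (Hder : forall v, derivable_pt_lim H v (turn_dens_t v t)).
  { intro v. pose proof (spd2_pos v t Ht'). eapply dl_eq.
    - unfold H, spd2, gxu, gyu. apply dl_div.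
      + apply dl_minus; apply dl_mult; first [apply Dx_u|apply Dy_u]; auto.
      + apply dl_plus; apply dl_pow; first [apply Dx_u|apply Dy_u]; auto.
      + fold (gxu v t) (gyu v t) (spd2 v t). lra.
    - unfold turn_dens_t, wedge, spd2, gxu, gyu, gxuu, gyuu. simpl. field.
      fold (gxu v t) (gyu v t). unfold spd2 in H0. nra. }
  rewrite (RInt_derive H _ Hder (fun v => cw_slice w _ v t Ht' (cw_turn_dens_t v t Ht'))).
  unfold H, spd2, gxu, gyu. replace 1 with (0 + 1) by ring. rewrite !Dx_per, !Dy_per by auto. ring.
Qed.

Lemma length_eq s : 0 <= s < w -> length gx gy s = RInt (fun u => spd u s) 0 1.
Proof.
  intro Hs. unfold length. f_equal. apply functional_extensionality. intro u. apply speed_eq; auto.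
Qed.

Lemma area_eq s : 0 <= s < w -> area gx gy s = / 2 * RInt (fun u => area_dens u s) 0 1.
Proof.
  intro Hs. unfold area. do 2 f_equal. apply functional_extensionality. intro u.
  unfold area_dens, xu, yu. rewrite (flow_du1 w gx Dx), (flow_du1 w gy Dy), Dx_base, Dy_base by auto.
  reflexivity.
Qed.

Lemma total_curv_eq s : 0 <= s < w ->
  RInt (fun u => curv gx gy u s * speed gx gy u s) 0 1 = RInt (fun u => turn_dens u s) 0 1.
Proof.
  intro Hs. f_equal. apply functional_extensionality. intro u.
  rewrite curv_eq, speed_eq by auto. unfold kap, turn_dens. rewrite spd2_sqr.
  pose proof (spd_pos u s Hs). field. lra.
Qed.

Lemma k2_eq s : 0 <= s < w -> int_k2 gx gy s = RInt (fun u => kap u s ^ 2 * spd u s) 0 1.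
Proof.
  intro Hs. unfold int_k2. f_equal. apply functional_extensionality. intro u.
  rewrite curv_eq, speed_eq by auto. reflexivity.
Qed.

Lemma total_curvature_const t : 0 < t < w ->
  RInt (fun u => turn_dens u t) 0 1 = RInt (fun u => turn_dens u 0) 0 1.
Proof.
  intro Ht. assert (w_pos : 0 < w) by lra. revert t Ht.
  apply (const_of_zero_deriv (fun s => RInt (fun u => turn_dens u s) 0 1) w).
  - intros s Hs. eapply dl_eq; [|apply (RInt_turn_dens_t s Hs)].
    apply (RInt_deriv_param w s turn_dens turn_dens_t Hs turn_dens_dt).
    + intros u s' Hs'. apply (cw_slice w); [lra|]. apply cw_turn_dens; lra.
    + intros u _. apply cw_turn_dens_t; lra.
  - intros eps Heps.
    destruct (RInt_cont_param w 0 turn_dens ltac:(lra)) with (eps := eps)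
      as [del [Hdel Hc]]; auto.
    + intros u _. apply cw_turn_dens; lra.
    + intros u s Hs. apply (cw_slice w); auto. apply cw_turn_dens; auto.
    + exists del. split; auto. intros s Hs Hsd. apply Hc; [rewrite Rminus_0_r, Rabs_right|]; lra.
Qed.

Lemma length_deriv t : 0 < t < w ->
  derivable_pt_lim (length gx gy) t (- RInt (fun u => Q_dens u t) 0 1).
Proof.
  intro Ht. apply (dl_loc (fun s => RInt (fun u => spd u s) 0 1) _ _ _ w); auto.
  { intros s Hs. symmetry. apply length_eq. lra. }
  eapply dl_eq.
  - apply (RInt_deriv_param w t spd spd_t Ht spd_dt).
    + intros u s Hs. apply (cw_slice w); [lra|]. apply cw_spd; lra.
    + intros u _. apply cw_spd_t; lra.
  - transitivity (RInt (fun u => -1 * Q_dens u t) 0 1).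
    + f_equal. apply functional_extensionality. intro u. rewrite spd_t_eq; auto. ring.
    + rewrite RInt_scal; [ring|]. apply (cont01_of_cw w); [lra|]. intro u. apply cw_Q_dens; lra.
Qed.

Lemma area_deriv t : 0 < t < w ->
  derivable_pt_lim (area gx gy) t (- RInt (fun u => P_dens u t) 0 1).
Proof.
  intro Ht. apply (dl_loc (fun s => / 2 * RInt (fun u => area_dens u s) 0 1) _ _ _ w); auto.
  { intros s Hs. symmetry. apply area_eq. lra. }
  eapply dl_eq.
  - apply (dl_mult (fun _ => / 2) (fun s => RInt (fun u => area_dens u s) 0 1));
      [apply dl_const|].
    apply (RInt_deriv_param w t area_dens area_dens_t Ht area_dens_dt).
    + intros u s Hs. apply (cw_slice w); [lra|]. apply cw_area_dens; lra.
    + intros u _. apply cw_area_dens_t; lra.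
  - rewrite RInt_area_dens_t by auto. lra.
Qed.

Lemma length_pos t : 0 < t < w -> 0 < length gx gy t.
Proof.
  intro Ht. rewrite length_eq by lra. apply RInt_pos.
  - apply (cont01_of_cw w); [lra|]. intro u. apply cw_spd; lra.
  - intros u _. apply spd_pos; lra.
Qed.

Lemma RInt_P_dens_pos t : 0 < t < w -> 0 < RInt (fun u => P_dens u t) 0 1.
Proof.
  intro Ht. assert (Ht' : 0 <= t < w) by lra. apply RInt_pos.
  - apply (cont01_of_cw w); auto using cw_P_dens.
  - intros u _. pose proof (kap_pos u t Ht') as Hk. pose proof (spd_pos u t Ht').
    destruct (G_props (kap u t) Hk) as [_ [Hg _]]. unfold P_dens.
    apply Rmult_lt_0_compat; [apply Rmult_lt_0_compat|]; auto.
Qed.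

(* Chebyshev's inequality for the similarly ordered functions G(k) and k
   (G is nondecreasing) with weight k |gamma_u|, together with
   int k ds = 2 pi, gives  P * int k^2 ds <= 2 pi Q. *)
Lemma chebyshev_bound t :
  RInt (fun u => curv gx gy u 0 * speed gx gy u 0) 0 1 = 2 * PI -> 0 < t < w ->
  RInt (fun u => P_dens u t) 0 1 * int_k2 gx gy t <= RInt (fun u => Q_dens u t) 0 1 * (2 * PI).
Proof.
  intros Hinit Ht. assert (Ht' : 0 <= t < w) by lra.
  assert (cK : cont01 (fun u => kap u t)) by (apply (cont01_of_cw w); auto using cw_kap).
  assert (cS : cont01 (fun u => spd u t)) by (apply (cont01_of_cw w); auto using cw_spd).
  assert (cG : cont01 (fun u => G (kap u t)))
    by (apply (cont01_of_cw w (fun u t => G (kap u t))); auto using cw_Gkap).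
  assert (total : RInt (fun u => kap u t * spd u t) 0 1 = 2 * PI).
  { rewrite <- Hinit, total_curv_eq, <- (total_curvature_const t Ht) by lra.
    f_equal. apply functional_extensionality; intro u. unfold turn_dens, kap.
    rewrite spd2_sqr. pose proof (spd_pos u t Ht'). field. lra. }
  assert (G_mono : forall x y, 0 < x -> x <= y -> G x <= G y).
  { apply (nondecreasing_of_nonneg_deriv G G1). intros x Hx. split; apply G_props; auto. }
  pose proof (chebyshev (fun u => G (kap u t)) (fun u => kap u t) (fun u => kap u t * spd u t)
                cG cK (cont01_mult _ _ cK cS)) as Hc.
  cbv beta in Hc. rewrite total in Hc.
  replace (RInt (fun u => P_dens u t) 0 1) with (RInt (fun u => G (kap u t) * (kap u t * spd u t)) 0 1)
    by (f_equal; apply functional_extensionality; intro; unfold P_dens; ring).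
  replace (RInt (fun u => Q_dens u t) 0 1)
    with (RInt (fun u => G (kap u t) * kap u t * (kap u t * spd u t)) 0 1)
    by (f_equal; apply functional_extensionality; intro; unfold Q_dens; ring).
  rewrite k2_eq by auto.
  replace (RInt (fun u => kap u t ^ 2 * spd u t) 0 1)
    with (RInt (fun u => kap u t * (kap u t * spd u t)) 0 1)
    by (f_equal; apply functional_extensionality; intro; ring).
  apply Hc.
  - intros u Hu. pose proof (kap_pos u t Ht'). pose proof (spd_pos u t Ht'). nra.
  - intros u v Hu Hv. pose proof (kap_pos u t Ht') as Hku. pose proof (kap_pos v t Ht') as Hkv.
    destruct (Rle_dec (kap u t) (kap v t)) as [Hle|Hle].
    + pose proof (G_mono (kap u t) (kap v t) Hku Hle). nra.
    + pose proof (G_mono (kap v t) (kap u t) Hkv ltac:(lra)). nra.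
Qed.

Lemma flow_liminf :
  0 < w ->
  RInt (fun u => curv gx gy u 0 * speed gx gy u 0) 0 1 = 2 * PI ->
  limit1_in (area gx gy) (fun t => 0 <= t < w) 0 w ->
  liminf_left_le
    (fun t => length gx gy t * (int_k2 gx gy t - PI * length gx gy t / area gx gy t)) w 0.
Proof.
  intros w_pos Hinit HA.
  apply (liminf_bound_of_evolution w (length gx gy) (area gx gy) (int_k2 gx gy)
           (fun t => RInt (fun u => P_dens u t) 0 1) (fun t => RInt (fun u => Q_dens u t) 0 1));
    auto using length_deriv, area_deriv, length_pos, RInt_P_dens_pos, chebyshev_bound.
Qed.

End Flow.

Theorem lemma2p11 (G : R -> R) (w : R) (gx gy : R -> R -> R)
  (HG : H1 G)
  (Hsol : is_solution G w gx gy)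
  (Hmax : maximal_solution G w gx gy)
  (Hinit : initial_strictly_convex gx gy)
  (HA : limit1_in (area gx gy) (fun t => 0 <= t < w) 0 w) :
  liminf_left_le
    (fun t => length gx gy t * (int_k2 gx gy t - PI * length gx gy t / area gx gy t))
    w 0.
Proof.
  destruct HG as [G1 [G2 [G3 HG]]].
  destruct Hsol as [Hw [[Dx [Hx0 [Hxu [Hxt Hxc]]]] [[Dy [Hy0 [Hyu [Hyt Hyc]]]]
                     [Hper [Hsp [Hk Hflow]]]]]].
  destruct Hinit as [_ Htotal].
  apply (flow_liminf G G1 w gx gy Dx Dy); auto.
  intros x Hx. destruct (HG x Hx) as [HG1 [_ [_ [_ [HGpos HG1pos]]]]]. auto.
Qed.
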